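(* Let $q\in(0,1]$. Then $\omega(R(SU_q(2)))=q^{-2}$.
   Context: $R(SU_q(2))$ is the fusion algebra with irreducible objects $I=\mathbb{Z}_+$, unit $0$, trivial involution, product $m\cdot n=\sum_{k\in\{|m-n|,|m-n|+2,\dots,m+n\}}k$, and dimension $d(n)=[n+1]_q$, where $[x]_q=\frac{q^{-x}-q^x}{q^{-1}-q}$ for $0<q<1$ and $[x]_1=x$. For $A\subseteq I$, $|A|=\sum_{\beta\in A}d(\beta)^2$. A finite generating set is a finite $X\subseteq I$ such that every $\beta\in I$ appears with nonzero coefficient in some product $x_1\cdots x_n$, $x_i\in X$; $\ell_X(0)=0$ and otherwise $\ell_X(\beta)$ is the least such $n\ge1$; $B_X(n)=\{\beta:\ell_X(\beta)\le n\}$. $\omega_X=\lim_{n\to\infty}|B_X(n)|^{1/n}$ (the limit exists) and $\omega(R(SU_q(2)))=\inf_X\omega_X$ over finite generating sets. *)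

From HB Require Import structures.
From mathcomp Require Import all_boot all_order all_algebra.
From mathcomp Require Import all_classical all_reals all_analysis.
Set Implicit Arguments. Unset Strict Implicit. Unset Printing Implicit Defensive.
Import Order.TTheory GRing.Theory Num.Theory.
Local Open Scope classical_set_scope.
Local Open Scope ring_scope.

(* Fusion rule of R(SU_q(2)): coefficient of k in m*n (0 or 1):
   k in {|m-n|, |m-n|+2, ..., m+n}. *)
Definition fus (m n k : nat) : nat :=
  [&& (m - n <= k)%N, (n - m <= k)%N, (k <= m + n)%N & ~~ odd (m + n + k)].

(* Coefficient of the irreducible k in the product x_1 * ... * x_n of the
   list s = [:: x_1; ...; x_n]  (empty product = unit object 0). *)
Fixpoint prodcoef (s : seq nat) (k : nat) : nat :=
  match s with
  | [::] => (k == 0)%N : nat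
  | x :: s' => (\sum_(j < (sumn s').+1) prodcoef s' j * fus x j k)%N
  end.

Definition qint {R : realType} (q : R) (x : nat) : R :=
  if q == 1 then x%:R else (q ^- x - q ^+ x) / (q^-1 - q).
Definition qdim {R : realType} (q : R) (n : nat) : R := qint q n.+1.

Definition generating (X : seq nat) : Prop :=
  forall b : nat, exists s : seq nat,
    [/\ (0 < size s)%N, all (mem X) s & (0 < prodcoef s b)%N].

(* Ball B_X(n) = {b : l_X(b) <= n}, with l_X(0) = 0. *)
Definition ball (X : seq nat) (n : nat) : set nat :=
  [set b | b = 0%N \/ exists s : seq nat,
    [/\ (0 < size s)%N, (size s <= n)%N, all (mem X) s & (0 < prodcoef s b)%N]].

Definition fsize {R : realType} (q : R) (A : set nat) : R :=
  \sum_(b \in A) qdim q b ^+ 2.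

Definition omegaX {R : realType} (q : R) (X : seq nat) : R :=
  limn (fun n : nat => fsize q (ball X n) `^ (n%:R^-1)).

Definition omega {R : realType} (q : R) : R :=
  inf [set omegaX q X | X in generating].

From Pilot Require Import Defs.
From mathcomp Require Import all_boot all_order all_algebra.
From mathcomp Require Import all_classical all_reals all_analysis.
From mathcomp Require Import lra ring zify.
Import Order.TTheory GRing.Theory Num.Theory numFieldNormedType.Exports.

(* For 0 < q <= 1 the dimensions satisfy q^-k <= [k+1]_q <= (k+1) q^-k.  The
   irreducibles occurring in a product of n generators from X are at most n m,
   where m is the largest element of X, and the n-th power of m contains n m.
   So B_X(n) is a subset of [0, n m] containing n m, and |B_X(n)| equals
   q^(-2nm) up to a factor at most (nm+1)^3, whose n-th root tends to 1: thus
   omega_X = q^(-2m).  A generating set must contain some m >= 1, and X = {1}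
   attains q^-2. *)

Lemma prodcoef_eq0 s k : (sumn s < k)%N -> prodcoef s k = 0%N.
Proof.
elim: s k => [|x s IH] k /= lt_s_k; first by case: k lt_s_k.
apply: big1 => j _; suff -> : fus x j k = 0%N by rewrite muln0.
by rewrite /fus; case: and4P => // -[_ _ le_k _]; have := ltn_ord j; lia.
Qed.

Lemma prodcoef_sumn_gt0 s : (0 < prodcoef s (sumn s))%N.
Proof.
elim: s => [|x s IH] //=; rewrite big_ord_recr /= ltn_addl //.
suff -> : fus x (sumn s) (x + sumn s) = 1%N by rewrite muln1.
by rewrite /fus addnn odd_double leqnn !andbT; case: andP => // -[]; split; lia.
Qed.

Lemma bigmax_seq_mem (s : seq nat) : s != [::] -> \max_(x <- s) x \in s.
Proof.
elim: s => [|y s IH] // _; rewrite big_cons in_cons.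
case: s IH => [|z s] IH; first by rewrite big_nil maxn0 eqxx.
by rewrite /maxn; case: ltnP => _; rewrite ?eqxx ?IH ?orbT.
Qed.

Lemma sumn_le_bigmax {X s : seq nat} :
  all (mem X) s -> (sumn s <= size s * \max_(x <- X) x)%N.
Proof.
elim: s => [|x s IH] //= /andP[Xx Xs].
by rewrite mulSn leq_add ?IH // (leq_bigmax_seq x).
Qed.

Lemma ball_le_bigmax X n b : Defs.ball X n b -> (b <= n * \max_(x <- X) x)%N.
Proof.
case=> [->|[s [_ size_s Xs coef_b]]] //.
case: (leqP b (sumn s)) => [le_b_s|/prodcoef_eq0 coef0]; last by rewrite coef0 in coef_b.
by rewrite (leq_trans le_b_s) // (leq_trans (sumn_le_bigmax Xs)) // leq_mul2r size_s orbT.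
Qed.

Lemma ball_mul_bigmax X n :
  X != [::] -> (0 < n)%N -> Defs.ball X n (n * \max_(x <- X) x)%N.
Proof.
move=> X_neq0 n_gt0; right; exists (nseq n (\max_(x <- X) x)).
split; rewrite ?size_nseq ?all_nseq //.
  by apply/orP; right; exact: bigmax_seq_mem.
by have := prodcoef_sumn_gt0 (nseq n (\max_(x <- X) x)); rewrite sumn_nseq mulnC.
Qed.

Lemma generating_bigmax_gt0 {X} : generating X -> (0 < \max_(x <- X) x)%N.
Proof.
case/(_ 1%N) => s [size_s Xs coef_1].
case: (leqP 1 (sumn s)) => [le_1_s|/prodcoef_eq0 coef0]; last by rewrite coef0 in coef_1.
by have := leq_trans le_1_s (sumn_le_bigmax Xs); rewrite muln_gt0 => /andP[].
Qed.

Lemma generating1 : generating [:: 1%N].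
Proof.
case=> [|b]; first by exists [:: 1%N; 1%N]; rewrite /= !big_ord_recr !big_ord0.
exists (nseq b.+1 1%N); rewrite size_nseq all_nseq /= inE.
by have := prodcoef_sumn_gt0 (nseq b.+1 1%N); rewrite sumn_nseq mul1n.
Qed.

Local Open Scope classical_set_scope.
Local Open Scope ring_scope.

Lemma fsum_bounded_nat {V : nmodType} {A : set nat} {N : nat} (F : nat -> V) :
  (forall b, A b -> (b <= N)%N) ->
  \sum_(b \in A) F b = \sum_(b < N.+1 | `[< A b >]) F b.
Proof.
move=> le_A_N; rewrite [RHS]big_mkcond (fsbig_ord _ _ (fun b => if `[< A b >] then F b else 0)).
rewrite -(fsbig_widen A).
- by apply: eq_fsbigr => b; rewrite inE => Ab; rewrite asboolT.
- by move=> b /le_A_N; rewrite /= ltnS.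
- by move=> b [_ nAb]; rewrite /= asboolF.
Qed.

Section QuantumDimension.
Context {R : realType} {q : R}.
Hypotheses (q_gt0 : 0 < q) (q_le1 : q <= 1).
Let q_ge0 : 0 <= q := ltW q_gt0.

Lemma qVX_ge0 k : 0 <= q^-1 ^+ k.
Proof. by rewrite exprn_ge0 // invr_ge0. Qed.

Lemma qdimE k : qdim q k = \sum_(i < k.+1) q^-1 ^+ (k - i) * q ^+ i.
Proof.
rewrite /qdim /qint; case: eqP => [->|/eqP q_neq1].
  by rewrite invr1 (eq_bigr (fun=> 1)) => [|i _]; rewrite ?sumr_const ?card_ord ?expr1n ?mulr1.
have qVq_neq0 : q^-1 - q != 0.
  rewrite subr_eq0; apply: contra_neq q_neq1 => qVq.
  by apply/eqP; rewrite -(sqrp_eq1 q_ge0) expr2 -{1}qVq mulVf // gt_eqF.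
by rewrite -exprVn subrXX mulrC mulKf.
Qed.

Lemma qdim_ge k : q^-1 ^+ k <= qdim q k.
Proof.
rewrite qdimE big_ord_recl /= subn0 mulr1 lerDl.
by apply: sumr_ge0 => i _; rewrite mulr_ge0 ?qVX_ge0 ?exprn_ge0.
Qed.

Lemma qdim_ge0 k : 0 <= qdim q k.
Proof. exact: le_trans (qVX_ge0 k) (qdim_ge k). Qed.

Lemma qdim_le k : qdim q k <= k.+1%:R * q^-1 ^+ k.
Proof.
rewrite qdimE mulr_natl -[in leRHS](card_ord k.+1) -sumr_const.
apply: ler_sum => i _; rewrite -[leRHS]mulr1; apply: ler_pM.
- exact: qVX_ge0.
- exact: exprn_ge0.
- by rewrite ler_weXn2l ?leq_subr // invf_ge1.
- exact: exprn_ile1.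
Qed.

Lemma fsize_ge0 (A : set nat) : 0 <= fsize q A.
Proof. by apply: fsumr_ge0 => b _; exact: sqr_ge0. Qed.

Lemma fsize_ge {A : set nat} {N : nat} :
  (forall b, A b -> (b <= N)%N) -> A N -> (q^-1 ^+ N) ^+ 2 <= fsize q A.
Proof.
move=> le_A_N AN; rewrite /fsize (fsum_bounded_nat _ le_A_N) (bigD1 ord_max) ?asboolT //=.
rewrite ler_wpDr ?sumr_ge0 // => [b _|]; first exact: sqr_ge0.
by apply: lerXn2r; rewrite ?nnegrE ?qVX_ge0 ?qdim_ge ?qdim_ge0.
Qed.

Lemma fsize_le {A : set nat} {N : nat} :
  (forall b, A b -> (b <= N)%N) -> fsize q A <= N.+1%:R ^+ 3 * (q^-1 ^+ N) ^+ 2.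
Proof.
move=> le_A_N; rewrite /fsize (fsum_bounded_nat _ le_A_N) big_mkcond /=.
have -> : N.+1%:R ^+ 3 * (q^-1 ^+ N) ^+ 2 = \sum_(b < N.+1) (N.+1%:R * q^-1 ^+ N) ^+ 2.
  by rewrite sumr_const card_ord -[_ *+ _]mulr_natl; ring.
apply: ler_sum => b _; case: asboolP => _; last exact: sqr_ge0.
apply: lerXn2r; rewrite ?nnegrE ?qdim_ge0 ?mulr_ge0 ?qVX_ge0 //.
apply: le_trans (qdim_le b) _; apply: ler_pM; rewrite ?qVX_ge0 ?ler_nat //.
by rewrite ler_weXn2l ?invf_ge1 // -ltnS.
Qed.

End QuantumDimension.

Section Roots.
Context {R : realType}.

Lemma powR_exprn (x p : R) (k : nat) : 0 <= x -> (x ^+ k) `^ p = (x `^ p) ^+ k.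
Proof.
move=> x_ge0; rewrite -powR_mulrn // -powRrM mulrC powRrM powR_mulrn //.
exact: powR_ge0.
Qed.

Lemma powR_exprn_invn (x : R) (n : nat) : 0 <= x -> (0 < n)%N -> (x ^+ n) `^ n%:R^-1 = x.
Proof.
move=> x_ge0 n_gt0.
by rewrite -powR_mulrn // -powRrM mulfV ?powRr1 // pnatr_eq0 -lt0n.
Qed.

Lemma affine_le_expRX (d : R) (M n : nat) :
  0 < d -> 2 * M%:R <= n%:R * d ^+ 2 -> (n * M).+1%:R <= expR d ^+ n.
Proof.
move=> d_gt0 le_M_nd; rewrite -expRM_natl.
apply: le_trans (expR_ge1Dxn 1 _); last by rewrite mulr_ge0 // ltW.
rewrite -addn1 natrD addrC lerD2l natrM exprMn.
have n_ge0 : (0 : R) <= n%:R by [].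
have -> : (2`!%:R : R) = 2 by [].
nra.
Qed.

Lemma root_affine_cvg1 (M : nat) :
  ((n * M).+1%:R : R) `^ n%:R^-1 @[n --> \oo] --> (1 : R).
Proof.
apply/cvgrPdist_le => e e_gt0.
set d := ln (1 + e).
have d_gt0 : 0 < d by rewrite ln_gt0 // ltrDl.
have expR_d : expR d = 1 + e by rewrite lnK // posrE ltr_wpDr // ltW.
near=> n.
have n_gt0 : (0 < n)%N by near: n; exact: nbhs_infty_gt.
have n_large : 2 * M%:R / d ^+ 2 <= n%:R :> R by near: n; exact: nbhs_infty_ger.
have ge1 : 1 <= ((n * M).+1%:R : R) by rewrite ler1n.
have invn_ge0 : 0 <= (n%:R : R)^-1 by rewrite invr_ge0.
rewrite distrC ger0_norm ?subr_ge0; last first.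
  by have := ler_powR ge1 invn_ge0; rewrite powRr0.
rewrite lerBlDl -expR_d -[l in _ <= l](powR_exprn_invn _ _ (expR_ge0 d) n_gt0).
apply: ge0_ler_powR; rewrite ?nnegrE ?exprn_ge0 ?expR_ge0 //.
apply: affine_le_expRX => //.
by rewrite -ler_pdivrMr ?exprn_gt0.
Unshelve. all: end_near.
Qed.

End Roots.

Lemma omegaX_generating (R : realType) (q : R) (X : seq nat) :
  0 < q -> q <= 1 -> generating X -> omegaX q X = q^-1 ^+ (2 * \max_(x <- X) x).
Proof.
move=> q_gt0 q_le1 genX; have M_gt0 := generating_bigmax_gt0 genX.
have X_neq0 : X != [::] by case: X {genX} M_gt0; rewrite ?big_nil.
set M := (\max_(x <- X) x)%N in M_gt0 *; set L := q^-1 ^+ (2 * M).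
set g := fun n : nat => ((n * M).+1%:R : R) `^ n%:R^-1.
have qV_ge0 : 0 <= q^-1 by rewrite invr_ge0 ltW.
have L_ge0 : 0 <= L by rewrite exprn_ge0.
have g3L : (fun n => g n ^+ 3 * L) @ \oo --> L.
  rewrite -[l in _ --> l]mul1r; apply: cvgMr_tmp; rewrite -(expr1n R 3).
  exact: (continuous_cvg _ (@exprn_continuous R 3 1)) (root_affine_cvg1 (R := R) M).
apply: cvg_lim => //; apply: squeeze_cvgr (cvg_cst L) g3L.
near=> n.
have n_gt0 : (0 < n)%N by near: n; exact: nbhs_infty_gt.
have invn_ge0 : (0 : R) <= n%:R^-1 by rewrite invr_ge0.
have ball_le := ball_le_bigmax X n.
have LnE : L ^+ n = (q^-1 ^+ (n * M)) ^+ 2 by rewrite -!exprM; congr (_ ^+ _); lia.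
have fsize_nneg : fsize q (Defs.ball X n) \is Num.nneg by rewrite nnegrE fsize_ge0.
apply/andP; split.
  rewrite -[l in l <= _](powR_exprn_invn _ _ L_ge0 n_gt0) LnE.
  apply: (ge0_ler_powR invn_ge0) => //; first by rewrite nnegrE !exprn_ge0.
  exact: fsize_ge ball_le (ball_mul_bigmax _ _ X_neq0 n_gt0).
apply: le_trans (ge0_ler_powR invn_ge0 fsize_nneg _ (fsize_le q_gt0 q_le1 ball_le)) _.
  by rewrite nnegrE mulr_ge0 ?exprn_ge0.
by rewrite powRM ?exprn_ge0 // powR_exprn // -LnE powR_exprn_invn.
Unshelve. all: end_near.
Qed.

Theorem proposition4p5 (R : realType) (q : R) (hq0 : 0 < q) (hq1 : q <= 1) :
  omega q = q ^- 2.
Proof.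
have omegaX1 : [set omegaX q X | X in generating] (q ^- 2).
  have gen1 := generating1; exists [:: 1%N] => //.
  by rewrite omegaX_generating // big_cons big_nil exprVn.
have omegaX_ge : lbound [set omegaX q X | X in generating] (q ^- 2).
  move=> _ [X genX <-]; rewrite omegaX_generating // -exprVn ler_weXn2l ?invf_ge1 //.
  by rewrite -{1}[2%N]muln1 leq_mul2l (generating_bigmax_gt0 genX).
apply/eqP; rewrite eq_le; apply/andP; split.
  by apply: ge_inf => //; exists (q ^- 2).
by apply: lb_le_inf => //; exists (q ^- 2).
Qed.
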